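(* Let $d\ge2$ and let $v_1,\dots,v_d\in\mathbb{R}^d$ be linearly independent, $\Delta=\mathrm{conv}(O,v_1,\dots,v_d)$. Let $\mathcal H$ be the hyperplane $\mathrm{Aff}(O,\,v_1+(d-1)v_2,\,v_1+(d-1)v_3,\dots,v_1+(d-1)v_d)$, and let $\delta$ be the simplex that $\mathcal H$ cuts off from $\mathrm{conv}(v_1,\dots,v_d)$ on the side containing $v_1$ (i.e. $\delta=\mathrm{conv}(v_1,\dots,v_d)\cap\mathcal H^{+}$, where $\mathcal H^+$ is the closed half-space bounded by $\mathcal H$ containing $v_1$). Let $\Phi$ be the closure of $$\mathbb{R}_+\delta\setminus\Bigl(\bigl(v_1+\mathbb{R}_+v_1+\mathbb{R}_+v_2+\dots+\mathbb{R}_+v_d\bigr)\cup\Delta\Bigr),$$ and $\Phi'=-\frac1{d-1}v_1+\frac d{d-1}\Phi$ (the image of $\Phi$ under the dilatation with center $v_1$ and factor $d/(d-1)$). Then $\Phi'\subset(d+1)\Delta$.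
   Context: $\mathbb{R}_+\delta$ is the cone $\{t x: t\ge0, x\in\delta\}$; $(d+1)\Delta$ is the dilate of $\Delta$ by $d+1$ with center $O$. *)

From HB Require Import structures.
From mathcomp Require Import all_boot all_order all_algebra.
From mathcomp Require Import all_classical all_reals all_analysis.
Set Implicit Arguments. Unset Strict Implicit. Unset Printing Implicit Defensive.
Import Order.TTheory GRing.Theory Num.Theory.
Import numFieldNormedType.Exports.
Local Open Scope classical_set_scope.
Local Open Scope ring_scope.

Definition convh (R : realType) (d : nat) (I : finType) (p : I -> 'rV[R]_d)
  : set 'rV[R]_d :=
  [set x | exists l : I -> R, (forall i, 0 <= l i) /\ \sum_i l i = 1 /\
                              x = \sum_i l i *: p i].

Definition affh (R : realType) (d : nat) (I : finType) (p : I -> 'rV[R]_d)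
  : set 'rV[R]_d :=
  [set x | exists l : I -> R, \sum_i l i = 1 /\ x = \sum_i l i *: p i].

Definition rcone (R : realType) (d : nat) (S : set 'rV[R]_d) : set 'rV[R]_d :=
  [set y | exists t x, 0 <= t /\ S x /\ y = t *: x].

Definition dotp (R : realType) (d : nat) (a x : 'rV[R]_d) : R := (x *m a^T) 0 0.

(* In the coordinates k of the basis v_1, ..., v_d, the hyperplane H is
   (d-1) k_1 = k_2 + ... + k_d, so a point of R_+ delta that lies neither in
   v_1 + R_+ v_1 + ... + R_+ v_d nor in Delta satisfies
     k >= 0,   sum k <= d k_1,   k_1 < 1,   sum k > 1,
   and these closed-up inequalities survive in the closure Phi.  The dilatation
   with centre v_1 and factor d/(d-1) maps k to k' = (d k - e_1)/(d-1), which is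
   nonnegative because d k_1 >= sum k >= 1, and has sum k' = (d sum k - 1)/(d-1)
   <= d + 1 because sum k <= d k_1 <= d. *)

From HB Require Import structures.
From mathcomp Require Import all_boot all_order all_algebra.
From mathcomp Require Import all_classical all_reals all_analysis.
From mathcomp Require Import ring lra.
Import Order.TTheory GRing.Theory Num.Theory.
Import numFieldNormedType.Exports.
Local Open Scope classical_set_scope.
Local Open Scope ring_scope.
Set Implicit Arguments. Unset Strict Implicit.

Lemma big_option (R : nmodType) (I : finType) (F : option I -> R) :
  \sum_o F o = F None + \sum_i F (Some i).
Proof.
rewrite (bigD1 None) //=; congr (_ + _).
rewrite (reindex_omap Some id) /=; last by case.
by apply: eq_bigl => i; rewrite eqxx.
Qed.

Lemma sum_indicator_scale (R : pzRingType) (V : lmodType R) (I : finType) (i : I)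
    (F : I -> V) :
  \sum_j (j == i)%:R *: F j = F i.
Proof.
rewrite (bigD1 i) //= eqxx scale1r big1 ?addr0 // => j /negbTE ->.
by rewrite scale0r.
Qed.

Lemma sum_indicator_mul (R : pzRingType) (I : finType) (i : I) (F : I -> R) :
  \sum_j (j == i)%:R * F j = F i.
Proof.
rewrite (bigD1 i) //= eqxx mul1r big1 ?addr0 // => j /negbTE ->.
by rewrite mul0r.
Qed.

Lemma sum_indicatorMB1 (R : pzRingType) (I : finType) (i : I) (c : R) (F : I -> R) :
  \sum_j (c * (j == i)%:R - 1) * F j = c * F i - \sum_j F j.
Proof.
under eq_bigr do rewrite mulrBl mul1r -mulrA.
by rewrite sumrB -mulr_sumr sum_indicator_mul.
Qed.

Lemma sum_indicator (R : pzRingType) (I : finType) (i : I) :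
  \sum_j ((j == i)%:R : R) = 1.
Proof. by rewrite (bigD1 i) //= eqxx big1 ?addr0 // => j /negbTE ->. Qed.

Lemma affh_vertex (R : realType) (d : nat) (I : finType) (p : I -> 'rV[R]_d) i :
  affh p (p i).
Proof.
by exists (fun j => (j == i)%:R); rewrite sum_indicator sum_indicator_scale.
Qed.

Lemma closure_ge_continuous (T : topologicalType) (R : realType) (f : T -> R)
    (b : R) (S : set T) :
  continuous f -> (forall x, S x -> b <= f x) ->
  forall x, closure S x -> b <= f x.
Proof.
move=> cf Sf; rewrite closureE.
apply: (@smallest_sub _ _ _ (f @^-1` [set y | b <= y])) => //.
exact: (continuous_closedP f).1 cf _ (closed_ge (y := b)).
Qed.

Section DotProduct.
Variables (R : realType) (d : nat) (a : 'rV[R]_d).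

Lemma dotp0 : dotp a 0 = 0.
Proof. by rewrite /dotp mul0mx mxE. Qed.

Lemma dotpD x y : dotp a (x + y) = dotp a x + dotp a y.
Proof. by rewrite /dotp mulmxDl mxE. Qed.

Lemma dotpZ t x : dotp a (t *: x) = t * dotp a x.
Proof. by rewrite /dotp -scalemxAl mxE. Qed.

Lemma dotp_sum (I : finType) (F : I -> 'rV[R]_d) :
  dotp a (\sum_i F i) = \sum_i dotp a (F i).
Proof. by rewrite /dotp mulmx_suml summxE. Qed.

End DotProduct.

Section Coordinates.
Variables (R : realType) (d : nat) (v : 'I_d -> 'rV[R]_d).

Definition vcoord (x : 'rV[R]_d) (i : 'I_d) : R := (x *m invmx (\matrix_j v j)) 0 i.

Lemma sum_scale_rowM (l : 'I_d -> R) :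
  \sum_i l i *: v i = (\row_i l i) *m (\matrix_i v i).
Proof. by rewrite mulmx_sum_row; apply: eq_bigr => i _; rewrite mxE rowK. Qed.

Lemma continuous_vcoord_comb (c : 'I_d -> R) :
  continuous (fun x => \sum_i c i * vcoord x i).
Proof.
apply: (continuous_big (op := +%R)); first exact: add_continuous.
move=> i _ x; apply: continuousM; first exact: cst_continuous.
have -> : (fun x => vcoord x i) =
          (fun x => \sum_j x 0 j * invmx (\matrix_k v k) j i).
  by apply/funext => y; rewrite /vcoord mxE.
apply: (continuous_big (op := +%R)); first exact: add_continuous.
move=> j _ y; apply: continuousM; first exact: coord_continuous.
exact: cst_continuous.
Qed.

Hypothesis v_basis : \matrix_i v i \in unitmx.

Lemma vcoordK x : \sum_i vcoord x i *: v i = x.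
Proof.
rewrite sum_scale_rowM.
have -> : \row_i vcoord x i = x *m invmx (\matrix_i v i) by apply/rowP => i; rewrite mxE.
by rewrite mulmxKV.
Qed.

Lemma vcoord_sum (l : 'I_d -> R) i : vcoord (\sum_j l j *: v j) i = l i.
Proof. by rewrite /vcoord sum_scale_rowM mulmxK // mxE. Qed.

End Coordinates.

Section Dilatation.
Variables (R : realType) (d : nat) (v : 'I_d -> 'rV[R]_d) (i1 : 'I_d).
Hypothesis d_ge2 : (2 <= d)%N.
Let D : R := d%:R.

Lemma dilatation_in_dilated_simplex (k : 'I_d -> R) :
  (forall i, 0 <= k i) -> \sum_i k i <= D * k i1 -> k i1 <= 1 -> 1 <= \sum_i k i ->
  exists2 z, convh (fun o : option 'I_d => if o is Some i then v i else 0) z &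
    d.+1%:R *: z = - (D - 1)^-1 *: v i1 + (D / (D - 1)) *: \sum_i k i *: v i.
Proof.
move=> k_ge0 sum_le k1_le1 sum_ge1.
have D2 : 2 <= D by rewrite /D (ler_nat R 2 d).
set e := (D - 1)^-1.
have e_gt0 : 0 < e by rewrite invr_gt0; lra.
have eD : e * (D - 1) = 1 by rewrite mulVf // subr_eq0; apply/eqP => h; lra.
pose k' i := D / (D - 1) * k i - e * (i == i1)%:R.
have k'_ge0 i : 0 <= k' i.
  rewrite /k'; case: (eqVneq i i1) => [->|_] /=.
    have := mulr_ge0 (ltW e_gt0) (_ : 0 <= D * k i1 - 1); rewrite -/e; nra.
  have := mulr_ge0 (ltW e_gt0) (k_ge0 i); rewrite -/e; nra.
have sum_k' : \sum_i k' i = D * e * \sum_i k i - e.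
  by rewrite sumrB -!mulr_sumr sum_indicator mulr1.
have sum_k'_le : \sum_i k' i <= D + 1 by rewrite sum_k'; nra.
pose l o := if o is Some i then k' i / (D + 1) else 1 - (\sum_i k' i) / (D + 1).
exists (\sum_o l o *: (if o is Some i then v i else 0)).
  exists l; split; last by rewrite big_option /= -mulr_suml subrK.
  case=> [i|] /=; first by apply: divr_ge0 => //; lra.
  by rewrite subr_ge0 ler_pdivrMr ?mul1r //; lra.
rewrite -natr1 big_option /= scaler0 add0r scaler_sumr.
rewrite (eq_bigr (fun i => k' i *: v i)); last first.
  by move=> i _; rewrite scalerA mulrC divfK //; apply/eqP; lra.
under eq_bigr do rewrite /k' scalerBl -!scalerA.
by rewrite sumrB -!scaler_sumr sum_indicator_scale scaleNr addrC scalerA.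
Qed.

End Dilatation.

Section HyperplaneCut.
Variables (R : realType) (d : nat) (v : 'I_d -> 'rV[R]_d) (i1 : 'I_d) (a : 'rV[R]_d).
Hypothesis d_ge2 : (2 <= d)%N.
Let D : R := d%:R.
Let v1 := v i1.
Hypothesis H_sub_kernel : forall x,
  affh (fun j => if j == i1 then 0 else v1 + (D - 1) *: v j) x -> dotp a x = 0.

Let D_gt1 : 1 < D. Proof. by rewrite /D ltr1n. Qed.

Lemma dotp_vertex j : j != i1 -> (D - 1) * dotp a (v j) = - dotp a v1.
Proof.
move=> ji1; have := H_sub_kernel (affh_vertex _ j).
rewrite /= (negbTE ji1) dotpD dotpZ => h.
by apply/eqP; rewrite -subr_eq0 opprK addrC h.
Qed.

Lemma dotp_comb (l : 'I_d -> R) :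
  (D - 1) * dotp a (\sum_i l i *: v i) = dotp a v1 * (D * l i1 - \sum_i l i).
Proof.
rewrite -sum_indicatorMB1 dotp_sum !mulr_sumr; apply: eq_bigr => i _; rewrite dotpZ.
case: (eqVneq i i1) => [->|ji1] /=; first by rewrite /v1; ring.
by rewrite mulrCA (dotp_vertex ji1); ring.
Qed.

Hypothesis v_basis : \matrix_i v i \in unitmx.
Hypothesis a_neq0 : a != 0.

Lemma dotp_v1_neq0 : dotp a v1 != 0.
Proof.
apply: contra a_neq0 => /eqP a_v1.
have a_v j : dotp a (v j) = 0.
  case: (eqVneq j i1) => [->//|ji1].
  have /eqP : (D - 1) * dotp a (v j) = 0 by rewrite dotp_vertex // a_v1 oppr0.
  by rewrite mulf_eq0 => /orP[/eqP|/eqP//]; have := D_gt1; lra.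
have Ma : (\matrix_i v i) *m a^T = 0.
  apply/matrixP => i k; rewrite (ord1 k) [RHS]mxE -(a_v i).
  by rewrite /dotp -rowK -row_mul [RHS]mxE.
apply/eqP/trmx_inj; rewrite trmx0.
by rewrite -(mulKmx v_basis a^T) Ma mulmx0.
Qed.

Hypothesis a_v1_ge0 : 0 <= dotp a v1.

Let a_v1_gt0 : 0 < dotp a v1.
Proof. by rewrite lt_def dotp_v1_neq0 a_v1_ge0. Qed.

Let cut_cone := rcone (convh v `&` [set x | 0 <= dotp a x]) `\`
  ([set x | exists t : 'I_d -> R, (forall i, 0 <= t i) /\ x = v1 + \sum_i t i *: v i]
   `|` convh (fun o : option 'I_d => if o is Some i then v i else 0)).

Lemma vcoord_cut_cone z : cut_cone z ->
  [/\ forall i, 0 <= vcoord v z i, \sum_i vcoord v z i <= D * vcoord v z i1,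
      vcoord v z i1 < 1 & 1 < \sum_i vcoord v z i].
Proof.
move=> [[t [_ [t_ge0 [[[l [l_ge0 [l_sum1 ->]]] a_w_ge0] ->]]]] not_cut].
have k_tl i : vcoord v (t *: \sum_j l j *: v j) i = t * l i.
  by rewrite scaler_sumr; under eq_bigr do rewrite scalerA; rewrite vcoord_sum.
have sum_k : \sum_i vcoord v (t *: \sum_j l j *: v j) i = t.
  by under eq_bigr do rewrite k_tl; rewrite -mulr_sumr l_sum1 mulr1.
have l_cut : 1 <= D * l i1.
  have : 0 <= dotp a v1 * (D * l i1 - \sum_i l i).
    by rewrite -dotp_comb; apply: mulr_ge0 => //; have := D_gt1; lra.
  by rewrite pmulr_rge0 // l_sum1 subr_ge0.
move: not_cut; rewrite sum_k k_tl; set y := t *: _ => not_cut.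
split.
- by move=> i; rewrite k_tl; apply: mulr_ge0.
- nra.
- rewrite ltNge; apply/negP => t_ge1; apply: not_cut; left.
  exists (fun i => vcoord v y i - (i == i1)%:R); split.
    move=> i; case: (eqVneq i i1) => [->|_] /=; first by rewrite k_tl subr_ge0.
    by rewrite subr0 k_tl; apply: mulr_ge0.
  under eq_bigr do rewrite scalerBl.
  by rewrite sumrB sum_indicator_scale vcoordK // addrC subrK.
- rewrite ltNge; apply/negP => t_le1; apply: not_cut; right.
  exists (fun o => if o is Some i then vcoord v y i else 1 - t); split.
    by case=> [i|]; [rewrite k_tl; apply: mulr_ge0 | rewrite subr_ge0].
  split; first by rewrite big_option sum_k subrK.
  by rewrite big_option /= scaler0 add0r vcoordK.
Qed.

Lemma vcoord_closure_cut_cone x : closure cut_cone x ->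
  [/\ forall i, 0 <= vcoord v x i, \sum_i vcoord v x i <= D * vcoord v x i1,
      vcoord v x i1 <= 1 & 1 <= \sum_i vcoord v x i].
Proof.
move=> cl_x.
have closed_comb c b : (forall z, cut_cone z -> b <= \sum_i c i * vcoord v z i) ->
    b <= \sum_i c i * vcoord v x i.
  move=> cut_b.
  exact: closure_ge_continuous (@continuous_vcoord_comb _ _ v c) cut_b _ cl_x.
split.
- move=> i; have := closed_comb (fun j => (j == i)%:R) 0.
  rewrite sum_indicator_mul; apply=> z.
  by rewrite sum_indicator_mul => /vcoord_cut_cone[].
- rewrite -subr_ge0; have := closed_comb (fun j => D * (j == i1)%:R - 1) 0.
  rewrite sum_indicatorMB1; apply=> z.
  by rewrite sum_indicatorMB1 subr_ge0 => /vcoord_cut_cone[].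
- rewrite -lerN2; have := closed_comb (fun j => - (j == i1)%:R) (-1).
  under eq_bigr do rewrite mulNr; rewrite sumrN sum_indicator_mul; apply=> z.
  under eq_bigr do rewrite mulNr; rewrite sumrN sum_indicator_mul lerN2.
  by move=> /vcoord_cut_cone[_ _ /ltW].
- have := closed_comb (fun=> 1) 1.
  under eq_bigr do rewrite mul1r; apply=> z.
  by under eq_bigr do rewrite mul1r; move=> /vcoord_cut_cone[_ _ _ /ltW].
Qed.

End HyperplaneCut.

Unset Implicit Arguments.

Theorem mainTheorem9 (R : realType) (d : nat) (hd : (2 <= d)%N)
    (v : 'I_d -> 'rV[R]_d) :
  row_free (\matrix_i v i) ->
  let v1 := v (Ordinal (ltnW hd)) in
  let Delta := convh (fun o : option 'I_d => if o is Some i then v i else 0) in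
  let H := affh (fun j : 'I_d =>
                  if j == Ordinal (ltnW hd) then 0 else v1 + (d%:R - 1) *: v j) in
  forall (a : 'rV[R]_d) (b : R),
    a != 0 -> [set x | dotp a x = b] = H -> b <= dotp a v1 ->
  let delta := convh v `&` [set x | b <= dotp a x] in
  let Phi := closure (rcone delta `\`
               ([set x | exists t : 'I_d -> R, (forall i, 0 <= t i) /\
                                   x = v1 + \sum_i t i *: v i] `|` Delta)) in
  let Phi' := [set - (d%:R - 1)^-1 *: v1 + (d%:R / (d%:R - 1)) *: x | x in Phi] in
  Phi' `<=` [set d.+1%:R *: x | x in Delta].
Proof.
move=> v_free v1 Delta H a b a_neq0 HH a_v1_ge0 delta Phi Phi' _ [x Phi_x <-].
have v_basis : \matrix_i v i \in unitmx by rewrite -row_free_unit.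
have H_sub : forall z, H z -> dotp a z = b by move=> z; rewrite -HH.
have b0 : b = 0.
  by rewrite -(H_sub _ (affh_vertex _ (Ordinal (ltnW hd)))) /= ?eqxx dotp0.
subst b.
have [k_ge0 k_cut k1_le1 k_sum_ge1] :=
  vcoord_closure_cut_cone hd H_sub v_basis a_neq0 a_v1_ge0 Phi_x.
have [z Delta_z z_eq] :=
  dilatation_in_dilated_simplex v hd k_ge0 k_cut k1_le1 k_sum_ge1.
exists z; first exact: Delta_z.
by rewrite z_eq vcoordK.
Qed.
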